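(* Let $c>2$ be a constant. Consider random directed graphs $\mathcal{G}_{n,p}$ on $n$ vertices in which each ordered pair $(u,v)$ of distinct vertices is an edge independently with probability $p$, where $p \ge \frac{c\log n}{n}$, together with an arbitrary partition $(V_1,V_P)$ of the vertices into player-1 and probabilistic vertices and an arbitrary nonempty target (B\''uchi) set $B$. Then the expected number of iterations of the classical algorithm for almost-sure winning in MDPs with B\''uchi objective $B$ is $O(1)$ (bounded by a constant independent of $n$ and $p$), and the average case running time of the algorithm is linear in the size of the graph.
   Context: $\log$ denotes the natural logarithm. For $U \subseteq V$ in a graph $G$ with vertex partition $(V_1,V_P)$, the random attractor $\mathrm{Attr}_P(U)$ is $\bigcup_{i\ge 0} X_i$, where $X_0=U$ and $X_{i+1}= X_i \cup \{v\in V_P : E(v)\cap X_i \neq\emptyset\} \cup \{v \in V_1 : E(v)\subseteq X_i\}$, with $E(v)$ the set of out-neighbours of $v$. The classical algorithm for B\''uchi objective $B$ works in iterations: starting from $G^1=G$ with vertex set $V^1$, in iteration $i$ it computes the set $Z^i$ of vertices of $G^i$ with a directed path in $G^i$ to a vertex of $B\cap V^i$, sets $U^i=V^i\setminus Z^i$; if $U^i=\emptyset$ it stops and outputs $Z^i$, otherwise it removes $\mathrm{Attr}_P(U^i)$ (computed in $G^i$) from $G^i$ to get $G^{i+1}$. Each iteration takes time linear in the size of the current graph, and there are at most $n$ iterations. *)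

From HB Require Import structures.
From mathcomp Require Import all_boot all_order all_algebra.
From mathcomp Require Import all_classical all_reals all_analysis.

Set Implicit Arguments.
Unset Strict Implicit.
Unset Printing Implicit Defensive.

Import Order.TTheory GRing.Theory Num.Theory.
Local Open Scope ring_scope.

Section Algo.
Variable n : nat.
Notation V := 'I_n.
(* E : edge set of the digraph (set of ordered pairs), V1 : player-1
   vertices (V_P is the complement), B : Buchi target set. *)
Variables (E : {set V * V}) (V1 B : {set V}).

Definition sub_edge (S : {set V}) : rel V :=
  fun x y => [&& x \in S, y \in S & (x, y) \in E].

(* Z: vertices of S having a directed path inside S to a vertex of B :&: S
   (the empty path counts) *)
Definition reachB (S : {set V}) : {set V} :=
  [set v in S | [exists b in B :&: S, connect (sub_edge S) v b]].

Definition attr_step (S X : {set V}) : {set V} :=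
  X :|: [set v in S :\: V1 | [exists w in X, sub_edge S v w]]
    :|: [set v in S :&: V1 | [forall w, sub_edge S v w ==> (w \in X)]].

(* Attr_P(U) in the subgraph induced by S; the increasing chain in a set
   with n elements stabilises after at most n steps. *)
Definition attrP (S U : {set V}) : {set V} := iter n.+1 (attr_step S) U.

Definition graph_size (S : {set V}) : nat :=
  #|S| + #|[set e in E | (e.1 \in S) && (e.2 \in S)]|.

(* run of the classical algorithm on the current vertex set S;
   returns (number of iterations, total work = sum of the sizes of the
   graphs G^i over all iterations i). *)
Fixpoint run (fuel : nat) (S : {set V}) : nat * nat :=
  match fuel with
  | 0 => (0, 0)%N
  | k.+1 =>
    let U := S :\: reachB S in
    if U == finset.set0 then (1, graph_size S)%N
    else let r := run k (S :\: attrP S U) in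
         (r.1.+1, r.2 + graph_size S)%N
  end.

(* at most n+1 iterations can occur (each non-final one removes a vertex),
   so fuel n.+2 is enough *)
Definition buchi_iterations : nat := (run n.+2 [set: V]).1.
Definition buchi_work : nat := (run n.+2 [set: V]).2.
End Algo.

Definition offdiag (n : nat) : {set 'I_n * 'I_n} := [set e | e.1 != e.2].

Definition gnp_prob (R : realType) (n : nat) (p : R) (E : {set 'I_n * 'I_n}) : R :=
  p ^+ #|E| * (1 - p) ^+ #|offdiag n :\: E|.

Definition gnp_expect (R : realType) (n : nat) (p : R)
  (f : {set 'I_n * 'I_n} -> R) : R :=
  \sum_(E in powerset (offdiag n)) gnp_prob p E * f E.

From HB Require Import structures.
From mathcomp Require Import all_boot all_order all_algebra.
From mathcomp Require Import all_classical all_reals all_analysis.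
From mathcomp Require Import zify ring lra.
Set Implicit Arguments.
Unset Strict Implicit.
Unset Printing Implicit Defensive.

Import Order.TTheory GRing.Theory Num.Theory.
Local Open Scope ring_scope.

(* If every vertex reaches B the algorithm stops after one iteration.  Otherwise
   the vertices that cannot reach B form a nonempty proper set T with no edge
   leaving it ("closed"), so the number of iterations, which is always at most
   n + 2, is bounded by 1 + (n + 1) * #{closed proper T}.  A fixed T with k
   vertices is closed with probability (1 - p)^(k (n - k)), and for
   p >= c ln n / n a case split on the sizes of the two sides bounds this by
   n^(-2k) + n^(-2(n - k)) + n^(-eps n) with eps = (c - 2)^2 / c.  Summing over
   T, the first two terms give at most 2 ((1 + n^-2)^n - 1) <= 2 (e^(1/n) - 1)
   and the last one 2^n n^(-eps n); both are O(1/n) once eps ln n >= 3, so the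
   expected number of iterations is bounded, while for the finitely many smaller
   n the bound n + 2 suffices.  The work is at most the number of iterations
   times the size of the graph, and the event "T is closed" only concerns the
   pairs leaving T, which makes it independent of the other edges. *)

Lemma setU1_ind (X : finType) (P : {set X} -> Prop) :
  P finset.set0 -> (forall (a : X) (A : {set X}), a \notin A -> P A -> P (a |: A)) ->
  forall A, P A.
Proof.
move=> P0 PU1 A; elim: #|A| {-2}A (erefl #|A|) => [|m IH] {}A cardA.
  by rewrite (cards0_eq cardA).
have /set0Pn[a aA] : A != finset.set0 by rewrite -card_gt0 cardA.
rewrite -(finset.setD1K aA); apply: PU1; first by rewrite !inE eqxx.
by apply: IH; move: cardA; rewrite (cardsD1 a) aA; lia.
Qed.

Lemma notin_subset (X : finType) (A E : {set X}) (a : X) :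
  E \subset A -> a \notin A -> a \notin E.
Proof. by move=> /fintype.subsetP sEA; apply: contra (sEA a). Qed.

Section RandomSubset.
Variables (R : numDomainType) (X : finType) (p : R).
Implicit Types (a : X) (A C E : {set X}) (h g : {set X} -> R).

Lemma big_powersetU1 h a A : a \notin A ->
  \sum_(E in powerset (a |: A)) h E =
  \sum_(E in powerset A) h E + \sum_(E in powerset A) h (a |: E).
Proof.
move=> aA; rewrite (bigID (fun E => a \in E)) /= addrC; congr (_ + _).
  by apply: eq_bigl => E; rewrite !powersetE -finset.subsetD1 setU1K.
rewrite (reindex_onto (fun E : {set X} => a |: E) (fun E => E :\ a)); last first.
  by move=> E /andP[_ aE]; rewrite finset.setD1K.
apply: eq_bigl => E; rewrite !powersetE setU11 andbT.
apply/andP/idP => [[sEA /eqP <-]|sEA].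
  by rewrite -(setU1K aA) finset.setSD.
by rewrite finset.setUS // setU1K // (notin_subset sEA aA).
Qed.

Definition subset_expect A h : R :=
  \sum_(E in powerset A) (p ^+ #|E| * (1 - p) ^+ #|A :\: E|) * h E.

Lemma eq_subset_expect A h g : (forall E, E \subset A -> h E = g E) ->
  subset_expect A h = subset_expect A g.
Proof. by move=> hg; apply: eq_bigr => E; rewrite powersetE => /hg ->. Qed.

Lemma subset_expectD A h g :
  subset_expect A (fun E => h E + g E) = subset_expect A h + subset_expect A g.
Proof. by rewrite -big_split; apply: eq_bigr => E _; rewrite mulrDr. Qed.

Lemma subset_expectZ A k h :
  subset_expect A (fun E => k * h E) = k * subset_expect A h.
Proof. by rewrite big_distrr; apply: eq_bigr => E _; rewrite mulrCA. Qed.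

Lemma subset_expect_sum (I : finType) (P : pred I) A (f : I -> {set X} -> R) :
  subset_expect A (fun E => \sum_(i | P i) f i E) =
  \sum_(i | P i) subset_expect A (f i).
Proof. by rewrite exchange_big; apply: eq_bigr => E _; rewrite big_distrr. Qed.

Lemma ler_subset_expect A h g : 0 <= p <= 1 ->
  (forall E, E \subset A -> h E <= g E) -> subset_expect A h <= subset_expect A g.
Proof.
move=> /andP[p0 p1] hg; apply: ler_sum => E; rewrite powersetE => /hg hgE.
by rewrite ler_wpM2l // mulr_ge0 // exprn_ge0 // subr_ge0.
Qed.

Lemma subset_expectU1 a A h : a \notin A ->
  subset_expect (a |: A) h =
  (1 - p) * subset_expect A h + p * subset_expect A (fun E => h (a |: E)).
Proof.
move=> aA; rewrite /subset_expect big_powersetU1 // !mulr_sumr.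
congr (_ + _); apply: eq_bigr => E; rewrite powersetE => sEA;
  have aE := notin_subset sEA aA; have leEA := subset_leq_card sEA.
  rewrite !cardsDS ?(fintype.subset_trans sEA (subsetU1 a A)) // cardsU1 aA.
  by rewrite add1n subSn // exprS; ring.
have sEA' : a |: E \subset a |: A by rewrite finset.setUS.
rewrite !cardsDS // !cardsU1 aA aE !add1n subSS exprS; ring.
Qed.

Lemma subset_expect_cst A k : subset_expect A (fun=> k) = k.
Proof.
elim/setU1_ind: A => [|a A aA IH].
  by rewrite /subset_expect powerset0 big_set1 cards0 finset.setD0 cards0 !mul1r.
by rewrite subset_expectU1 // IH; ring.
Qed.

Lemma subset_expect_card A : subset_expect A (fun E => #|E|%:R) = p * #|A|%:R.
Proof.
elim/setU1_ind: A => [|a A aA IH].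
  by rewrite /subset_expect powerset0 big_set1 !cards0 !mulr0.
rewrite subset_expectU1 // IH.
rewrite (@eq_subset_expect A _ (fun E => #|E|%:R + 1)); last first.
  by move=> E sEA; rewrite cardsU1 (notin_subset sEA aA) natrD addrC.
by rewrite subset_expectD IH subset_expect_cst cardsU1 aA add1n -addn1 natrD; ring.
Qed.

Lemma subset_expect_disjoint A C g : C \subset A ->
  subset_expect A (fun E => [disjoint E & C]%:R * g E) =
  (1 - p) ^+ #|C| * subset_expect (A :\: C) g.
Proof.
move=> sCA; rewrite /subset_expect big_distrr (bigID (fun E => [disjoint E & C])) /=.
rewrite [X in _ + X]big1 ?addr0 => [|E /andP[_ /negbTE ->]]; last first.
  by rewrite mulr0n mul0r !mulr0.
have sub_AC E : (E \in powerset A) && [disjoint E & C] = (E \in powerset (A :\: C)).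
  by rewrite !powersetE finset.subsetD.
rewrite (eq_bigl _ _ sub_AC); apply: eq_bigr => E sEAC.
move: (sEAC); rewrite -sub_AC => /andP[_ ->]; rewrite mul1r.
move: sEAC; rewrite powersetE => sEAC.
have sEA : E \subset A := fintype.subset_trans sEAC (finset.subsetDl A C).
have := subset_leq_card sEAC; have := subset_leq_card sCA.
rewrite !cardsDS // => leCA leEAC.
rewrite -[(#|A| - #|E|)%N](@subnK #|C|) ?exprD; first by rewrite subnAC; ring.
lia.
Qed.

Lemma sum_powerset_expn (y : R) A : \sum_(E in powerset A) y ^+ #|E| = (1 + y) ^+ #|A|.
Proof.
elim/setU1_ind: A => [|a A aA IH]; first by rewrite powerset0 big_set1 !cards0.
rewrite big_powersetU1 // IH cardsU1 aA exprS.
under eq_bigr => E /[!powersetE] sEA do rewrite cardsU1 (notin_subset sEA aA) exprS.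
by rewrite -mulr_sumr IH; ring.
Qed.

End RandomSubset.

Definition cut {n : nat} (T : {set 'I_n}) : {set 'I_n * 'I_n} := finset.setX T (~: T).

Definition proper_set {n : nat} (T : {set 'I_n}) : bool :=
  (T != finset.set0) && (T != [set: 'I_n]).

Lemma proper_setC (n : nat) (T : {set 'I_n}) : proper_set (~: T) = proper_set T.
Proof.
rewrite /proper_set andbC; congr (_ && _).
  by rewrite -finset.setC0 (inj_eq (@finset.setC_inj _)).
by rewrite -finset.setCT (inj_eq (@finset.setC_inj _)).
Qed.

Lemma sum_proper_expn_le (R : numDomainType) (n : nat) (y : R) : 0 <= y ->
  \sum_(T : {set 'I_n} | proper_set T) y ^+ #|T| <= (1 + y) ^+ n - 1.
Proof.
move=> y0; have := sum_powerset_expn y [set: 'I_n]; rewrite powersetT cardsT card_ord.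
rewrite (bigD1 finset.set0) ?finset.in_setT //= cards0 expr0 => <-; rewrite addrC addrK.
rewrite big_mkcond [leRHS]big_mkcond; apply: ler_sum => T _.
rewrite finset.in_setT /proper_set; case: (T != _) => //=.
by case: ifP => // _; rewrite exprn_ge0.
Qed.

Section Algorithm.
Variables (n : nat) (E : {set 'I_n * 'I_n}) (V1 B : {set 'I_n}).

Lemma graph_size_le S : (graph_size E S <= n + #|E|)%N.
Proof.
apply: leq_add; first by rewrite -[leqRHS](card_ord n) max_card.
by apply: subset_leq_card; apply/fintype.subsetP => e; rewrite inE => /andP[].
Qed.

Lemma run_iterations_le fuel S : ((run E V1 B fuel S).1 <= fuel)%N.
Proof. by elim: fuel S => [|k IH] S //=; case: ifP => _ //=; rewrite ltnS IH. Qed.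

Lemma run_work_le fuel S :
  ((run E V1 B fuel S).2 <= (run E V1 B fuel S).1 * (n + #|E|))%N.
Proof.
elim: fuel S => [|k IH] S //=; have := graph_size_le S.
by case: ifP => _ /= leS; rewrite ?mul1n // mulSn addnC leq_add.
Qed.

Lemma buchi_iterations_le : (buchi_iterations E V1 B <= n.+2)%N.
Proof. exact: run_iterations_le. Qed.

Lemma buchi_work_le : (buchi_work E V1 B <= buchi_iterations E V1 B * (n + #|E|))%N.
Proof. exact: run_work_le. Qed.

Lemma buchi_iterations_reachB_setT : reachB E B [set: 'I_n] = [set: 'I_n] ->
  buchi_iterations E V1 B = 1%N.
Proof. by rewrite /buchi_iterations /= => ->; rewrite finset.setDv eqxx. Qed.

(* The witness is the set of vertices that cannot reach B. *)
Lemma closed_cut_of_unreachable : B != finset.set0 ->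
  reachB E B [set: 'I_n] != [set: 'I_n] ->
  exists2 T : {set 'I_n}, proper_set T & [disjoint E & cut T].
Proof.
move=> /set0Pn[b bB] unreach; set Z := reachB E B [set: 'I_n].
have bZ : b \in Z.
  by rewrite !inE /=; apply/existsP; exists b; rewrite !inE bB connect0.
exists (~: Z).
  rewrite proper_setC /proper_set unreach andbT.
  by apply/set0Pn; exists b.
rewrite disjoint_subset; apply/fintype.subsetP => -[u v] uv.
rewrite /cut finset.setCK; apply/negP.
rewrite finset.in_setX finset.in_setC => /andP[/negP uZ].
rewrite inE => /andP[_ /exists_inP[b' b'B vb']]; apply: uZ.
rewrite inE finset.in_setT; apply/exists_inP; exists b' => //.
by apply: connect_trans vb'; apply: connect1; rewrite /sub_edge !inE.
Qed.

End Algorithm.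

Definition closed_cut_count {n : nat} (E : {set 'I_n * 'I_n}) : nat :=
  \sum_(T : {set 'I_n} | proper_set T) [disjoint E & cut T].

Lemma buchi_iterations_le_cut_count (n : nat) (E : {set 'I_n * 'I_n})
    (V1 B : {set 'I_n}) : B != finset.set0 ->
  (buchi_iterations E V1 B <= 1 + n.+1 * closed_cut_count E)%N.
Proof.
move=> B0; have [reach|unreach] := eqVneq (reachB E B [set: 'I_n]) [set: 'I_n].
  by rewrite buchi_iterations_reachB_setT ?leq_addr.
have [T properT closedT] := closed_cut_of_unreachable B0 unreach.
have : (1 <= closed_cut_count E)%N by rewrite /closed_cut_count (bigD1 T) //= closedT.
by have := buchi_iterations_le E V1 B; nia.
Qed.

Section Expectation.
Variables (R : realType) (n : nat) (p : R).
Hypothesis p01 : 0 <= p <= 1.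
Implicit Types (E : {set 'I_n * 'I_n}) (T : {set 'I_n}).

Definition cut_weight : R :=
  \sum_(T : {set 'I_n} | proper_set T) (1 - p) ^+ (#|T| * #|~: T|).

Local Notation mean_size := (n%:R + gnp_expect p (fun E => #|E|%:R)).

Lemma gnp_expectE (f : {set 'I_n * 'I_n} -> R) :
  gnp_expect p f = subset_expect p (offdiag n) f.
Proof. by []. Qed.

Lemma cut_sub_offdiag T : cut T \subset offdiag n.
Proof.
apply/fintype.subsetP => -[u v]; rewrite finset.in_setX finset.in_setC !inE /=.
by case/andP=> uT; apply: contraNneq => <-.
Qed.

Lemma gnp_expect_disjoint_cut T g :
  gnp_expect p (fun E => [disjoint E & cut T]%:R * g E) =
  (1 - p) ^+ (#|T| * #|~: T|) * subset_expect p (offdiag n :\: cut T) g.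
Proof. by rewrite gnp_expectE subset_expect_disjoint ?cut_sub_offdiag // cardsX. Qed.

Lemma subset_expect_size_le (A : {set 'I_n * 'I_n}) : A \subset offdiag n ->
  subset_expect p A (fun E => (n + #|E|)%:R) <= mean_size.
Proof.
move=> sA; case/andP: p01 => p0 _.
under eq_subset_expect => E _ do rewrite natrD.
rewrite subset_expectD subset_expect_cst gnp_expectE !subset_expect_card lerD2l.
by rewrite ler_wpM2l // ler_nat subset_leq_card.
Qed.

Lemma mean_size_ge0 : 0 <= mean_size.
Proof. by rewrite addr_ge0 // gnp_expectE subset_expect_card mulr_ge0 ?(andP p01).1. Qed.

Lemma gnp_expect_cut_count :
  gnp_expect p (fun E => (closed_cut_count E)%:R) = cut_weight.
Proof.
rewrite gnp_expectE; under eq_subset_expect => E _ do rewrite natr_sum.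
rewrite subset_expect_sum; apply: eq_bigr => T _.
rewrite (@eq_subset_expect _ _ p _ _ (fun E => [disjoint E & cut T]%:R * 1)).
  by rewrite -gnp_expectE gnp_expect_disjoint_cut subset_expect_cst mulr1.
by move=> E _; rewrite mulr1.
Qed.

Lemma gnp_expect_cut_count_size :
  gnp_expect p (fun E => (closed_cut_count E)%:R * (n + #|E|)%:R) <=
  cut_weight * mean_size.
Proof.
rewrite gnp_expectE; under eq_subset_expect => E _ do rewrite natr_sum mulr_suml.
rewrite subset_expect_sum mulr_suml; apply: ler_sum => T _.
rewrite -gnp_expectE gnp_expect_disjoint_cut.
rewrite ler_wpM2l ?exprn_ge0 ?subr_ge0 ?(andP p01).2 //.
exact/subset_expect_size_le/(fintype.subset_trans (finset.subsetDl _ _)).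
Qed.

Lemma gnp_expect_buchi_le_of (V1 B : {set 'I_n}) (phi : {set 'I_n * 'I_n} -> R)
    (b : R) : (forall E, (buchi_iterations E V1 B)%:R <= phi E) ->
  gnp_expect p phi <= b ->
  gnp_expect p (fun E => phi E * (n + #|E|)%:R) <= b * mean_size ->
  gnp_expect p (fun E => (buchi_iterations E V1 B)%:R) <= b /\
  gnp_expect p (fun E => (buchi_work E V1 B)%:R) <= b * mean_size.
Proof.
move=> iter_le phi_le phi_size_le; split.
  by apply: le_trans phi_le; apply: ler_subset_expect.
apply: le_trans phi_size_le; apply: ler_subset_expect => // E _.
apply: le_trans (ler_wpM2r _ (iter_le E)) => //.
by rewrite -natrM ler_nat buchi_work_le.
Qed.

Lemma gnp_expect_buchi_le (V1 B : {set 'I_n}) (b : R) : B != finset.set0 ->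
  (n.+2)%:R <= b \/ 1 + (n.+1)%:R * cut_weight <= b ->
  gnp_expect p (fun E => (buchi_iterations E V1 B)%:R) <= b /\
  gnp_expect p (fun E => (buchi_work E V1 B)%:R) <= b * mean_size.
Proof.
move=> B0 [] hb.
  apply: (gnp_expect_buchi_le_of (phi := fun=> (n.+2)%:R)) => [E||].
  - by rewrite ler_nat buchi_iterations_le.
  - by rewrite gnp_expectE subset_expect_cst.
  - apply: le_trans (ler_wpM2r mean_size_ge0 hb).
    rewrite gnp_expectE subset_expectZ ler_wpM2l //.
    exact/subset_expect_size_le/fintype.subxx.
apply: (gnp_expect_buchi_le_of (phi := fun E => 1 + (n.+1)%:R * (closed_cut_count E)%:R)).
- by move=> E; rewrite -natrM -[1]/(1%:R) -natrD ler_nat buchi_iterations_le_cut_count.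
- by rewrite gnp_expectE subset_expectD subset_expectZ subset_expect_cst -gnp_expectE
    gnp_expect_cut_count.
- rewrite gnp_expectE; under eq_subset_expect => E _ do rewrite mulrDl mul1r -mulrA.
  rewrite subset_expectD subset_expectZ -!gnp_expectE.
  apply: le_trans (ler_wpM2r mean_size_ge0 hb); rewrite mulrDl mul1r -mulrA.
  rewrite lerD ?ler_wpM2l ?gnp_expect_cut_count_size //.
  exact/subset_expect_size_le/fintype.subxx.
Qed.

End Expectation.

Lemma ln_nat_ge0 (R : realType) (n : nat) : 0 <= ln (n%:R : R).
Proof. by case: n => [|n]; [rewrite ln0 | rewrite ln_ge0 // ler1n]. Qed.

Lemma expr_le_expR (R : realType) (x : R) (m : nat) :
  x <= 1 -> (1 - x) ^+ m <= expR (- (x * m%:R)).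
Proof.
move=> x1; rewrite -mulNr expRM_natr lerXn2r ?nnegrE ?subr_ge0 ?expR_ge0 //.
exact: expR_ge1Dx.
Qed.

Definition cut_decay {R : realFieldType} (c : R) : R := (c - 2) ^+ 2 / c.

Lemma cut_decay_gt0 (R : realFieldType) (c : R) : 2 < c -> 0 < cut_decay c.
Proof. by move=> c2; rewrite divr_gt0 ?exprn_gt0 ?subr_gt0 //; lra. Qed.

(* Unless one side holds at least a 2/c fraction of k + j, both sides hold more
   than a (1 - 2/c) fraction. *)
Lemma cut_product_cases (R : realFieldType) (c k j : R) :
  2 < c -> 0 <= k -> 0 <= j ->
  [\/ 2 * k * (k + j) <= c * k * j, 2 * j * (k + j) <= c * k * j
    | cut_decay c * (k + j) * (k + j) <= c * k * j].
Proof.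
move=> c2 k0 j0.
have [hj|hj] := lerP (2 * (k + j)) (c * j).
  apply: Or31; have -> : c * k * j = k * (c * j) by ring.
  by rewrite [2 * _]mulrC -mulrA ler_wpM2l.
have [hk|hk] := lerP (2 * (k + j)) (c * k).
  apply: Or32; have -> : c * k * j = j * (c * k) by ring.
  by rewrite [2 * _]mulrC -mulrA ler_wpM2l.
apply: Or33.
have ck : (c - 2) * (k + j) <= c * k by lra.
have cj : (c - 2) * (k + j) <= c * j by lra.
have : (c - 2) * (k + j) * ((c - 2) * (k + j)) <= c * k * (c * j).
  by apply: ler_pM => //; apply: mulr_ge0; lra.
rewrite -subr_ge0 => h; rewrite -subr_ge0.
have -> : c * k * j - cut_decay c * (k + j) * (k + j) =
          (c * k * (c * j) - (c - 2) * (k + j) * ((c - 2) * (k + j))) / c.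
  by rewrite /cut_decay; field; lra.
by rewrite divr_ge0 //; lra.
Qed.

Lemma cut_term_le (R : realType) (c p : R) (n k j : nat) :
  2 < c -> (k + j = n)%N -> (0 < n)%N -> c * ln n%:R / n%:R <= p -> p <= 1 ->
  (1 - p) ^+ (k * j) <= expR (- (2 * ln n%:R)) ^+ k + expR (- (2 * ln n%:R)) ^+ j
                        + expR (- (cut_decay c * ln n%:R)) ^+ n.
Proof.
move=> c2 kjn n_gt0 hp p1; set L := ln (n%:R : R).
have L0 : 0 <= L := ln_nat_ge0 R n.
have n0 : 0 < n%:R :> R by rewrite ltr0n.
have expR_le (x y : R) m : y * m%:R <= x -> expR (- x) <= expR (- y) ^+ m.
  by move=> yx; rewrite -expRM_natr ler_expR mulNr lerN2.
have scale (x : R) : x * n%:R <= c * k%:R * j%:R -> L * x <= L * (c * k%:R * j%:R) / n%:R.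
  by move=> xn; rewrite ler_pdivlMr // -(mulrA L) ler_wpM2l.
have pow_le : (1 - p) ^+ (k * j) <= expR (- (L * (c * k%:R * j%:R) / n%:R)).
  apply: le_trans (expr_le_expR _ p1) _; rewrite ler_expR lerN2 natrM.
  have -> : L * (c * k%:R * j%:R) / n%:R = c * L / n%:R * (k%:R * j%:R) by field; lra.
  by rewrite ler_wpM2r // mulr_ge0.
apply: le_trans pow_le _.
have y0 m : 0 <= expR (- (2 * L)) ^+ m by rewrite exprn_ge0 ?expR_ge0.
have z0 : 0 <= expR (- (cut_decay c * L)) ^+ n by rewrite exprn_ge0 ?expR_ge0.
case: (cut_product_cases c2 (ler0n R k) (ler0n R j)); rewrite -natrD kjn => hkj.
- apply: le_trans (expR_le _ (2 * L) k _) _; last by rewrite -addrA lerDl addr_ge0.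
  by rewrite -mulrA mulrCA scale.
- apply: le_trans (expR_le _ (2 * L) j _) _; last by rewrite addrAC lerDr addr_ge0.
  by rewrite -mulrA mulrCA scale.
- apply: le_trans (expR_le _ (cut_decay c * L) n _) _; last by rewrite lerDr addr_ge0.
  by rewrite [_ * L]mulrC -(mulrA L (cut_decay c)) scale.
Qed.

Lemma natr_expR_inv_le (R : realType) (n : nat) : (2 <= n)%N ->
  (n.+1)%:R * (expR (n%:R^-1) - 1) <= 3 :> R.
Proof.
move=> n2; set u := expR (n%:R^-1 : R).
have n2R : 2 <= n%:R :> R by rewrite (ler_nat R 2 n).
have u1 : 1 <= u.
  by apply: le_trans (expR_ge1Dx _); rewrite lerDl invr_ge0.
have key : (n%:R - 1) * u <= n%:R.
  have h : 1 - n%:R^-1 <= u^-1 by rewrite /u -expRN expR_ge1Dx.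
  have -> : (n%:R - 1) * u = n%:R * u * (1 - n%:R^-1) by field; lra.
  apply: (le_trans (ler_wpM2l _ h)); first by rewrite mulr_ge0 ?expR_ge0.
  by rewrite mulfK // gt_eqF ?expR_gt0.
rewrite -addn1 natrD; nra.
Qed.

Lemma exp2_expr_le1 (R : realFieldType) (n : nat) (z : R) :
  0 <= z -> 4 * z <= 1 -> (n.+1)%:R * ((2 ^ n)%:R * z ^+ n) <= 1.
Proof.
move=> z0 z4; apply: (@le_trans _ _ ((2 ^ n)%:R * ((2 ^ n)%:R * z ^+ n))).
  by rewrite ler_wpM2r ?mulr_ge0 ?exprn_ge0 // ler_nat ltn_expl.
by rewrite natrX mulrA -!exprMn exprn_ile1 ?mulr_ge0 //; lra.
Qed.

Lemma cut_weight_le_expR (R : realType) (c p : R) (n : nat) :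
  2 < c -> (0 < n)%N -> c * ln n%:R / n%:R <= p -> p <= 1 ->
  cut_weight n p <= 2 * ((1 + expR (- (2 * ln n%:R))) ^+ n - 1)
                    + (2 ^ n)%:R * expR (- (cut_decay c * ln n%:R)) ^+ n.
Proof.
move=> c2 n0 hp p1; have cardTC (T : {set 'I_n}) : (#|T| + #|~: T| = n)%N.
  by rewrite cardsC card_ord.
apply: le_trans (ler_sum _ (fun T _ => cut_term_le c2 (cardTC T) n0 hp p1)) _.
rewrite !big_split /= lerD //.
  rewrite [2 * (_ - 1)]mulr_natl mulr2n lerD ?sum_proper_expn_le ?expR_ge0 //.
  rewrite (reindex_inj (@finset.setC_inj _)) /=.
  under eq_bigl do rewrite proper_setC.
  under eq_bigr do rewrite finset.setCK.
  by rewrite sum_proper_expn_le ?expR_ge0.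
rewrite sumr_const -[_ ^+ n *+ _]mulr_natl ler_wpM2r ?exprn_ge0 ?expR_ge0 // ler_nat.
apply: leq_trans (max_card _) _.
by rewrite -cardsT -powersetT card_powerset cardsT card_ord.
Qed.

Lemma cut_weight_le (R : realType) (c p : R) (n : nat) :
  2 < c -> (2 <= n)%N -> c * ln n%:R / n%:R <= p -> p <= 1 ->
  3 <= cut_decay c * ln n%:R -> 1 + (n.+1)%:R * cut_weight n p <= 8.
Proof.
move=> c2 n2 hp p1 decay3; have := cut_weight_le_expR c2 (ltnW n2) hp p1.
set L := ln (n%:R : R); set y := expR (- (2 * L)); set z := expR (- (cut_decay c * L)).
move=> weight_le.
have n0 : 0 < n%:R :> R by rewrite ltr0n ltnW.
have yn : y * n%:R = n%:R^-1.
  by rewrite /y expRN expRM_natl lnK ?posrE //; field; lra.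
have pow_le : (n.+1)%:R * ((1 + y) ^+ n - 1) <= 3.
  apply: le_trans (natr_expR_inv_le R n2); rewrite ler_wpM2l // lerD2r -yn expRM_natr.
  by rewrite lerXn2r ?nnegrE ?addr_ge0 ?expR_ge0 // expR_ge1Dx.
have z4 : 4 * z <= 1.
  rewrite /z expRN ler_pdivrMr ?expR_gt0 // mul1r.
  by have := expR_ge1Dx (cut_decay c * L); rewrite /L; lra.
have := exp2_expr_le1 n (expR_ge0 _ : 0 <= z) z4.
have : (n.+1)%:R * cut_weight n p <=
       2 * ((n.+1)%:R * ((1 + y) ^+ n - 1)) + (n.+1)%:R * ((2 ^ n)%:R * z ^+ n).
  by rewrite mulrCA -mulrDr ler_wpM2l.
lra.
Qed.

Lemma ln_nat_large (R : realType) (a b : R) : 0 < a ->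
  exists N : nat, forall n, (N <= n)%N -> b <= a * ln n%:R.
Proof.
move=> a0; exists (Num.Def.archi_bound (expR (b / a))) => n Nn.
have bn : expR (b / a) < n%:R.
  by apply: lt_le_trans (archi_boundP (expR_ge0 _)) _; rewrite ler_nat.
have n0 : (n%:R : R) \is Num.pos by rewrite posrE (lt_trans (expR_gt0 _) bn).
by rewrite -ler_pdivrMl // mulrC -(expRK (b / a)) ler_ln ?posrE ?expR_gt0 ?ltW.
Qed.

Theorem theorem2 (R : realType) (c : R) : 2 < c ->
  exists K : R, forall (n : nat) (p : R),
    c * ln (n%:R) / n%:R <= p -> p <= 1 ->
    forall V1 B : {set 'I_n}, B != finset.set0 ->
      gnp_expect p (fun E : {set 'I_n * 'I_n} => (buchi_iterations E V1 B)%:R) <= K /\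
      gnp_expect p (fun E : {set 'I_n * 'I_n} => (buchi_work E V1 B)%:R)
        <= K * (n%:R + gnp_expect p (fun E : {set 'I_n * 'I_n} => #|E|%:R)).
Proof.
move=> c2; have [N largeN] := ln_nat_large 3 (cut_decay_gt0 c2).
exists (maxn (maxn 2 N).+2 8)%:R => n p hp p1 V1 B B0.
have p0 : 0 <= p.
  by apply: le_trans hp; rewrite divr_ge0 ?mulr_ge0 ?ln_nat_ge0 //; lra.
apply: gnp_expect_buchi_le => //; first by rewrite p0 p1.
have [|n_small] := leqP (maxn 2 N) n.
  rewrite geq_max => /andP[n2 Nn]; right.
  apply: le_trans (cut_weight_le c2 n2 hp p1 (largeN n Nn)) _.
  by rewrite (ler_nat R 8) leq_maxr.
by left; rewrite ler_nat; lia.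
Qed.
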